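(* Let $U\subset\mathbb{R}^m$ be open with coordinates $q=(q^a,q^\alpha)$, $1\le a\le m-n$, $1\le\alpha\le n$; let $g=(g_{ij})$ be a Riemannian metric on $U$, $V\colon U\to\mathbb{R}$ smooth, $\Gamma^\alpha_a\colon U\to\mathbb{R}$ smooth, and $h>0$. Define $$\mathbb{L}_d(q_0,q_1)=\frac{1}{2h}g_{ij}(q_0)(q_1^i-q_0^i)(q_1^j-q_0^j)-hV(q_0),$$ $$C_d=\{(q_0,q_1)\in U\times U:\ q_1^\alpha-q_0^\alpha=\Gamma^\alpha_a(q_0)(q_1^a-q_0^a),\ 1\le\alpha\le n\},$$ and $L_d=\mathbb{L}_d|_{C_d}$. Let $\gamma_{ab}=g_{ab}+g_{a\alpha}\Gamma^\alpha_b+g_{b\alpha}\Gamma^\alpha_a+g_{\alpha\beta}\Gamma^\alpha_a\Gamma^\beta_b$, $(\gamma^{ab})$ its inverse matrix, and define $H\colon T^*U\to\mathbb{R}$ by $H(q,p)=\frac12\gamma^{ab}(q)P_aP_b+V(q)$ with $P_a=p_a+p_\alpha\Gamma^\alpha_a(q)$. Then the set $\Upsilon(\Sigma_{L_d})\subset T^*U\times T^*U$ coincides with the set of $(q_0,p_0,q_1,p_1)$ satisfying the symplectic Euler scheme $$p_1=p_0-h\frac{\partial H}{\partial q}(q_0,p_1),\qquad q_1=q_0+h\frac{\partial H}{\partial p}(q_0,p_1).$$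
   Context: $\gamma_{ab}$ is invertible since $g$ is Riemannian. For a submanifold $N\subset Q$ and $f\colon N\to\mathbb{R}$, $\Sigma_f=\{\mu\in T^*Q:\ \pi_Q(\mu)\in N,\ \langle\mu,v\rangle=\langle df,v\rangle\ \forall v\in T_{\pi_Q(\mu)}N\}$; $\Sigma_{L_d}\subset T^*(U\times U)$ is this set for $Q=U\times U$, $N=C_d$, $f=L_d$. Concretely, with constraint functions $\phi^\alpha_d(q_0,q_1)=q_1^\alpha-q_0^\alpha-\Gamma^\alpha_a(q_0)(q_1^a-q_0^a)$, $\Sigma_{L_d}$ consists of covectors $(\mu_0,\mu_1)$ at points of $C_d$ with $\mu_0=\partial_{q_0}\mathbb{L}_d+\lambda_\alpha\partial_{q_0}\phi^\alpha_d$, $\mu_1=\partial_{q_1}\mathbb{L}_d+\lambda_\alpha\partial_{q_1}\phi^\alpha_d$ for some multipliers $\lambda_\alpha$. $\Upsilon\colon T^*(U\times U)\to T^*U\times T^*U$ is $\Upsilon(\gamma_{q_0},\gamma_{q_1})=(-\gamma_{q_0},\gamma_{q_1})$ under $T^*_{(q_0,q_1)}(U\times U)\cong T^*_{q_0}U\times T^*_{q_1}U$; points of $T^*U\times T^*U$ are written $(q_0,p_0,q_1,p_1)$. *)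

From Stdlib Require Import Reals Lra ClassicalEpsilon List.
Import ListNotations.
Open Scope R_scope.

(* Points of R^m are represented as functions nat -> R; only the coordinates
   i < m are meaningful. *)
Definition vec := nat -> R.

Fixpoint sumR (n : nat) (f : nat -> R) : R :=
  match n with O => 0 | S n' => sumR n' f + f n' end.

Definition basis (i : nat) : vec := fun j => if Nat.eqb i j then 1 else 0.
Definition vadd (x y : vec) : vec := fun i => x i + y i.
Definition vscal (t : R) (x : vec) : vec := fun i => t * x i.

Definition is_open (m : nat) (U : vec -> Prop) : Prop :=
  forall x, U x -> exists eps, 0 < eps /\
    forall y, (forall i, (i < m)%nat -> Rabs (y i - x i) < eps) -> U y.

(* f is a function of the first m coordinates only (i.e. a function on R^m). *)
Definition dep_first (m : nat) (f : vec -> R) : Prop :=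
  forall x y, (forall i, (i < m)%nat -> x i = y i) -> f x = f y.

Definition cont_at (m : nat) (f : vec -> R) (x : vec) : Prop :=
  forall eps, 0 < eps -> exists del, 0 < del /\
    forall y, (forall i, (i < m)%nat -> Rabs (y i - x i) < del) ->
      Rabs (f y - f x) < eps.

(* f is smooth (C^infinity) on U: all iterated partial derivatives D l
   (l = list of directions) exist and are continuous on U. *)
Definition smooth_on (m : nat) (U : vec -> Prop) (f : vec -> R) : Prop :=
  exists D : list nat -> vec -> R,
    (forall x, U x -> D nil x = f x) /\
    (forall l i x, (i < m)%nat -> U x ->
       derivable_pt_lim (fun t => D l (vadd x (vscal t (basis i)))) 0 (D (cons i l) x)) /\
    (forall l x, U x -> cont_at m (D l) x).

Definition partial (f : vec -> R) (x : vec) (i : nat) : R :=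
  epsilon (inhabits 0)
    (fun l => derivable_pt_lim (fun t => f (vadd x (vscal t (basis i)))) 0 l).

Definition riemannian (m : nat) (U : vec -> Prop) (g : vec -> nat -> nat -> R) : Prop :=
  (forall i j, (i < m)%nat -> (j < m)%nat ->
     smooth_on m U (fun q => g q i j) /\ dep_first m (fun q => g q i j)) /\
  (forall q i j, U q -> (i < m)%nat -> (j < m)%nat -> g q i j = g q j i) /\
  (forall q (v : vec), U q -> (exists i, (i < m)%nat /\ v i <> 0) ->
     0 < sumR m (fun i => sumR m (fun j => g q i j * v i * v j))).

Definition mat_inv (k : nat) (M : nat -> nat -> R) : nat -> nat -> R :=
  epsilon (inhabits (fun _ _ => 0))
    (fun N => forall a c, (a < k)%nat -> (c < k)%nat ->
       sumR k (fun b => M a b * N b c) = if Nat.eqb a c then 1 else 0).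

(* Index convention: coordinates q^a are indices a < m-n (0-based),
   coordinates q^alpha are indices (m-n)+alpha, alpha < n.
   Gam alpha a q = Gamma^alpha_a(q). *)

Definition LLd (m : nat) (g : vec -> nat -> nat -> R) (V : vec -> R) (h : R)
  (q0 q1 : vec) : R :=
  / (2 * h) * sumR m (fun i => sumR m (fun j =>
      g q0 i j * (q1 i - q0 i) * (q1 j - q0 j))) - h * V q0.

Definition phid (m n : nat) (Gam : nat -> nat -> vec -> R) (al : nat)
  (q0 q1 : vec) : R :=
  q1 ((m - n) + al)%nat - q0 ((m - n) + al)%nat
  - sumR (m - n) (fun a => Gam al a q0 * (q1 a - q0 a)).

Definition Cd (m n : nat) (U : vec -> Prop) (Gam : nat -> nat -> vec -> R)
  (q0 q1 : vec) : Prop :=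
  U q0 /\ U q1 /\ forall al, (al < n)%nat -> phid m n Gam al q0 q1 = 0.

Definition Upsilon_Sigma_Ld (m n : nat) (U : vec -> Prop)
  (g : vec -> nat -> nat -> R) (V : vec -> R) (Gam : nat -> nat -> vec -> R)
  (h : R) (q0 p0 q1 p1 : vec) : Prop :=
  Cd m n U Gam q0 q1 /\
  exists lam : nat -> R,
    forall i, (i < m)%nat ->
      - p0 i = partial (fun x => LLd m g V h x q1) q0 i
               + sumR n (fun al => lam al * partial (fun x => phid m n Gam al x q1) q0 i)
      /\
      p1 i = partial (fun x => LLd m g V h q0 x) q1 i
               + sumR n (fun al => lam al * partial (fun x => phid m n Gam al q0 x) q1 i).

Definition gam_ab (m n : nat) (g : vec -> nat -> nat -> R)
  (Gam : nat -> nat -> vec -> R) (q : vec) (a b : nat) : R :=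
  let k := (m - n)%nat in
  g q a b
  + sumR n (fun al => g q a (k + al)%nat * Gam al b q)
  + sumR n (fun al => g q b (k + al)%nat * Gam al a q)
  + sumR n (fun al => sumR n (fun be =>
       g q (k + al)%nat (k + be)%nat * Gam al a q * Gam be b q)).

Definition Pa (m n : nat) (Gam : nat -> nat -> vec -> R) (q p : vec) (a : nat) : R :=
  p a + sumR n (fun al => p ((m - n) + al)%nat * Gam al a q).

Definition Ham (m n : nat) (g : vec -> nat -> nat -> R) (V : vec -> R)
  (Gam : nat -> nat -> vec -> R) (q p : vec) : R :=
  let k := (m - n)%nat in
  let gi := mat_inv k (gam_ab m n g Gam q) in
  / 2 * sumR k (fun a => sumR k (fun b =>
          gi a b * Pa m n Gam q p a * Pa m n Gam q p b)) + V q.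

Definition symplectic_euler (m n : nat) (U : vec -> Prop)
  (g : vec -> nat -> nat -> R) (V : vec -> R) (Gam : nat -> nat -> vec -> R)
  (h : R) (q0 p0 q1 p1 : vec) : Prop :=
  U q0 /\ U q1 /\
  forall i, (i < m)%nat ->
    p1 i = p0 i - h * partial (fun q => Ham m n g V Gam q p1) q0 i /\
    q1 i = q0 i + h * partial (fun p => Ham m n g V Gam q0 p) p1 i.

From Stdlib Require Import Reals Lra Lia FunctionalExtensionality ClassicalEpsilon.
From mathcomp Require all_boot all_fingroup all_algebra Rstruct.
Open Scope R_scope.

(* Write [k = m - n], [Δ = q1 - q0] and [L(q)] for the [m x k] "horizontal
   lift" whose columns span the constraint distribution
   [{v : v^(k+α) = Γ^α_a(q) v^a}]; then [γ = Lᵀ g L] is symmetric and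
   positive definite, so [H] is well defined and smooth.  All partial
   derivatives are computed explicitly at a base point:
   - the condition [p1 = D2 L_d + λ D2 φ] splits into its constrained
     components, which determine the multipliers [λ], and its free
     components, which say [P = γΔ/h], i.e. [Δ^a = h ∂H/∂p_a]; together with
     the constraints this is exactly [q1 = q0 + h ∂H/∂p(q0,p1)];
   - on this flow, [D1 L_d + D2 L_d + λ(D1 φ + D2 φ) = -h ∂H/∂q(q0,p1)],
     using [∂(γ^-1) = -γ^-1 (∂γ) γ^-1] and [∂γ = ∂(Lᵀ g L)]; this turns
     [-p0 = D1 L_d + λ D1 φ] into [p1 = p0 - h ∂H/∂q(q0,p1)]. *)

Lemma sumR_ext n f f' : (forall i, (i < n)%nat -> f i = f' i) -> sumR n f = sumR n f'.
Proof.
  induction n as [|n IH]; intros H; simpl; [reflexivity|].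
  rewrite IH, H; [reflexivity | lia | intros; apply H; lia].
Qed.

Lemma sumR_add n f f' : sumR n (fun i => f i + f' i) = sumR n f + sumR n f'.
Proof. induction n; simpl; [lra|]. rewrite IHn; lra. Qed.

Lemma sumR_sub n f f' : sumR n (fun i => f i - f' i) = sumR n f - sumR n f'.
Proof. induction n; simpl; [lra|]. rewrite IHn; lra. Qed.

Lemma sumR2_add n (f f' : nat -> nat -> R) :
  sumR n (fun j => sumR n (fun l => f j l + f' j l))
  = sumR n (fun j => sumR n (f j)) + sumR n (fun j => sumR n (f' j)).
Proof. rewrite <- sumR_add. apply sumR_ext; intros; apply sumR_add. Qed.

Lemma sumR2_sub n (f f' : nat -> nat -> R) :
  sumR n (fun j => sumR n (fun l => f j l - f' j l))
  = sumR n (fun j => sumR n (f j)) - sumR n (fun j => sumR n (f' j)).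
Proof. rewrite <- sumR_sub. apply sumR_ext; intros; apply sumR_sub. Qed.

Lemma sumR_opp n f : sumR n (fun i => - f i) = - sumR n f.
Proof. induction n; simpl; [lra|]. rewrite IHn; lra. Qed.

Lemma sumR_mul_l c n f : c * sumR n f = sumR n (fun i => c * f i).
Proof. induction n; simpl; [lra|]. rewrite <- IHn; lra. Qed.

Lemma sumR_mul_r n f c : sumR n f * c = sumR n (fun i => f i * c).
Proof. induction n; simpl; [lra|]. rewrite <- IHn; lra. Qed.

Lemma sumR_mul_sums n n' f f' :
  sumR n f * sumR n' f' = sumR n (fun i => sumR n' (fun j => f i * f' j)).
Proof. rewrite sumR_mul_r. apply sumR_ext; intros. apply sumR_mul_l. Qed.

Lemma sumR_eq0 n f : (forall i, (i < n)%nat -> f i = 0) -> sumR n f = 0.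
Proof. induction n; intros H; simpl; [lra|]. rewrite IHn, H by (auto; lia). lra. Qed.

Lemma sumR_swap n n' (f : nat -> nat -> R) :
  sumR n (fun i => sumR n' (f i)) = sumR n' (fun j => sumR n (fun i => f i j)).
Proof.
  induction n; simpl.
  - symmetry; apply sumR_eq0; reflexivity.
  - rewrite IHn, <- sumR_add. reflexivity.
Qed.

Lemma sumR_split k n f : sumR (k + n) f = sumR k f + sumR n (fun a => f (k + a)%nat).
Proof.
  induction n; simpl.
  - rewrite Nat.add_0_r; lra.
  - rewrite Nat.add_succ_r; simpl. rewrite IHn; lra.
Qed.

Lemma basis_sym i j : basis i j = basis j i.
Proof. unfold basis. rewrite Nat.eqb_sym. reflexivity. Qed.

Lemma basis_neq i j : i <> j -> basis i j = 0.
Proof. intros H. unfold basis. destruct (Nat.eqb_spec i j); [lia|reflexivity]. Qed.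

Lemma basis_shift k i j : basis (k + i)%nat (k + j)%nat = basis i j.
Proof.
  unfold basis. destruct (Nat.eqb_spec (k + i) (k + j)), (Nat.eqb_spec i j);
    reflexivity || lia.
Qed.

Lemma sumR_basis n i f : (i < n)%nat -> sumR n (fun j => basis i j * f j) = f i.
Proof.
  induction n; intros H; [lia|]. simpl. destruct (Nat.eq_dec i n) as [->|Hne].
  - rewrite sumR_eq0 by (intros j Hj; rewrite basis_neq by lia; ring).
    unfold basis. rewrite Nat.eqb_refl. ring.
  - rewrite IHn, basis_neq by lia. ring.
Qed.

(* [sum_in] pushes products of sums and scalar factors inside the sums;
   [sum_ring] then closes equalities of nested sums whose summands agree
   up to commutative-ring normalisation. *)
Ltac sum_in := repeat (match goal with
 | |- context [sumR ?n ?f * sumR ?n' ?f'] => rewrite (sumR_mul_sums n n' f f')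
 | |- context [?c * sumR ?n ?f] =>
     lazymatch c with context [sumR _ _] => fail | _ => rewrite (sumR_mul_l c n f) end
 | |- context [sumR ?n ?f * ?c] =>
     lazymatch c with context [sumR _ _] => fail | _ => rewrite (sumR_mul_r n f c) end
 end).
Ltac sum_ring := repeat (rewrite Rmult_plus_distr_l || rewrite Rmult_plus_distr_r); sum_in;
  first [ ring
        | match goal with |- _ + _ = _ + _ => apply (f_equal2 Rplus); sum_ring end
        | apply sumR_ext; let i := fresh "i" in let Hi := fresh "Hi" in
          intros i Hi; cbv beta; sum_ring ].

Lemma sumR_pullback k k' m (A : nat -> nat -> R) (M M' : nat -> nat -> R) (u v : nat -> R) :
  sumR k (fun c => sumR k' (fun d =>
     sumR m (fun j => sumR m (fun l => A j l * M j c * M' l d)) * u c * v d))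
  = sumR m (fun j => sumR m (fun l =>
     A j l * sumR k (fun c => M j c * u c) * sumR k' (fun d => M' l d * v d))).
Proof.
  transitivity (sumR k (fun c => sumR m (fun j => sumR m (fun l =>
     sumR k' (fun d => A j l * M j c * M' l d * u c * v d))))).
  - apply sumR_ext; intros c Hc.
    transitivity (sumR k' (fun d => sumR m (fun j => sumR m (fun l =>
       A j l * M j c * M' l d * u c * v d)))); [sum_ring|].
    rewrite sumR_swap. apply sumR_ext; intros j Hj. apply sumR_swap.
  - rewrite sumR_swap. apply sumR_ext; intros j Hj. rewrite sumR_swap.
    apply sumR_ext; intros l Hl. sum_ring.
Qed.

Notation D0 f l := (derivable_pt_lim f 0 l).

Definition line (x : vec) (i : nat) (t : R) : vec := vadd x (vscal t (basis i)).

Lemma line_0 x i : line x i 0 = x.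
Proof. apply functional_extensionality; intros j. unfold line, vadd, vscal. ring. Qed.

Lemma D0_const c : D0 (fun _ => c) 0.
Proof. apply derivable_pt_lim_const. Qed.
Lemma D0_plus f f' a b : D0 f a -> D0 f' b -> D0 (fun t => f t + f' t) (a + b).
Proof. apply derivable_pt_lim_plus. Qed.
Lemma D0_minus f f' a b : D0 f a -> D0 f' b -> D0 (fun t => f t - f' t) (a - b).
Proof. apply derivable_pt_lim_minus. Qed.
Lemma D0_opp f a : D0 f a -> D0 (fun t => - f t) (- a).
Proof. apply derivable_pt_lim_opp. Qed.
Lemma D0_mult f f' a b : D0 f a -> D0 f' b -> D0 (fun t => f t * f' t) (a * f' 0 + f 0 * b).
Proof. apply derivable_pt_lim_mult. Qed.
Lemma D0_unique f a b : D0 f a -> D0 f b -> a = b.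
Proof. apply uniqueness_limite. Qed.

Lemma D0_sumR n F dF : (forall j, (j < n)%nat -> D0 (F j) (dF j)) ->
  D0 (fun t => sumR n (fun j => F j t)) (sumR n dF).
Proof.
  induction n; intros H; simpl.
  - apply D0_const.
  - apply D0_plus; [apply IHn; intros; apply H|apply H]; lia.
Qed.

Lemma D0_coord x i j : D0 (fun t => line x i t j) (basis i j).
Proof.
  replace (basis i j) with (0 + 1 * basis i j) by ring.
  apply D0_plus; [apply D0_const|].
  apply (derivable_pt_lim_scal_right (fun t => t) 0 1 (basis i j)), derivable_pt_lim_id.
Qed.

Lemma D0_local f f' a d : 0 < d -> (forall t, Rabs t < d -> f t = f' t) -> D0 f a -> D0 f' a.
Proof.
  intros Hd Heq Hf eps He. destruct (Hf eps He) as [del Hdel].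
  assert (Hm : 0 < Rmin del d) by (apply Rmin_pos; [apply cond_pos|lra]).
  exists (mkposreal _ Hm). intros t Ht0 Htd. simpl in Htd.
  rewrite <- !Heq.
  - apply Hdel; auto. apply Rlt_le_trans with (1 := Htd); apply Rmin_l.
  - rewrite Rabs_R0; lra.
  - rewrite Rplus_0_l. apply Rlt_le_trans with (1 := Htd); apply Rmin_r.
Qed.

Lemma partial_eq f x i l : D0 (fun t => f (line x i t)) l -> partial f x i = l.
Proof.
  intros H. unfold partial.
  apply (D0_unique (fun t => f (line x i t))); [|exact H].
  apply (epsilon_spec (inhabits 0)
    (fun l => derivable_pt_lim (fun t => f (vadd x (vscal t (basis i)))) 0 l)).
  exists l; exact H.
Qed.

Lemma open_line m U x i : is_open m U -> U x ->
  exists d, 0 < d /\ forall t, Rabs t < d -> U (line x i t).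
Proof.
  intros HU Hx. destruct (HU x Hx) as [e [He H]]. exists e; split; auto.
  intros t Ht. apply H. intros j Hj. unfold line, vadd, vscal, basis.
  destruct (Nat.eqb i j).
  - replace (x j + t * 1 - x j) with t by ring. exact Ht.
  - replace (x j + t * 0 - x j) with 0 by ring. rewrite Rabs_R0; lra.
Qed.

Lemma smooth_D0 m U f x i : is_open m U -> smooth_on m U f -> U x -> (i < m)%nat ->
  D0 (fun t => f (line x i t)) (partial f x i).
Proof.
  intros HU [D [H0 [H1 _]]] Hx Hi.
  destruct (open_line m U x i HU Hx) as [d [Hd Hl]].
  assert (HD : D0 (fun t => f (line x i t)) (D (cons i nil) x)).
  { apply (D0_local (fun t => D nil (line x i t)) _ _ d Hd);
      [intros t Ht; apply H0, Hl, Ht | apply H1; auto]. }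
  rewrite (partial_eq _ _ _ _ HD). exact HD.
Qed.

(* [d0_tree] builds the derivative of an expression by the sum and product
   rules, with leaves solved by the hint base [d0], [D0_const] and [D0_coord];
   [d0_calc] leaves the resulting value, evaluated at [t = 0] and with zero
   terms outside sums removed, to be compared with the claimed one. *)
Create HintDb d0.
Ltac d0_tree := first
  [ solve [auto with d0] | apply D0_const | apply D0_coord
  | apply D0_plus; d0_tree | apply D0_minus; d0_tree | apply D0_opp; d0_tree
  | apply D0_mult; d0_tree
  | apply D0_sumR; let j := fresh "j" in let Hj := fresh "Hj" in intros j Hj; d0_tree ].
Lemma D0_eq_value f a b : D0 f a -> a = b -> D0 f b.
Proof. intros H ->; exact H. Qed.
Ltac d0_calc := eapply D0_eq_value; [d0_tree | cbv beta; rewrite ?line_0;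
  rewrite ?Rmult_0_l, ?Rmult_0_r, ?Rplus_0_l, ?Rplus_0_r, ?Rminus_0_r].

(** We transfer to MathComp matrices, where positive
    definiteness gives a nonzero determinant, and Cramer's rule
    [A^-1 = adj A / det A] gives differentiability of the inverse. *)

Definition pos_def (k : nat) (M : nat -> nat -> R) : Prop :=
  forall v : vec, (exists a, (a < k)%nat /\ v a <> 0) ->
    0 < sumR k (fun a => sumR k (fun b => M a b * v a * v b)).

Definition mx_symmetric (k : nat) (M : nat -> nat -> R) : Prop :=
  forall a b, (a < k)%nat -> (b < k)%nat -> M a b = M b a.

(* derivative of the quadratic form [N(P,P)] of a symmetric [N] in direction [dP] *)
Lemma sumR_sym_polar k N (P dP : nat -> R) : mx_symmetric k N ->
  sumR k (fun a => sumR k (fun b => N a b * dP a * P b + N a b * P a * dP b))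
  = 2 * sumR k (fun a => dP a * sumR k (fun b => N a b * P b)).
Proof.
  intros Hsym. rewrite sumR2_add.
  assert (E : sumR k (fun a => sumR k (fun b => N a b * P a * dP b))
              = sumR k (fun a => sumR k (fun b => N a b * dP a * P b))).
  { rewrite sumR_swap. apply sumR_ext; intros a Ha. apply sumR_ext; intros b Hb.
    rewrite (Hsym b a) by assumption. ring. }
  rewrite E, <- Rplus_diag. f_equal; sum_ring.
Qed.

Definition ex_D0 (f : R -> R) : Prop := exists l, D0 f l.

Module MatrixInverse.
Import all_boot all_fingroup all_algebra Rstruct.
Import GRing.Theory.
Local Open Scope ring_scope.
Local Set Implicit Arguments.

Lemma sumR_big n f : sumR n f = \sum_(i < n) f i.
Proof.
elim: n => [|n IH]; first by rewrite big_ord0.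
by rewrite big_ord_recr /= -IH RplusE.
Qed.

Definition Mx (k : nat) (M : nat -> nat -> R) : 'M[R]_k := \matrix_(a, b) M a b.

Definition vec_of (k : nat) (v : 'rV[R]_k) : vec :=
  fun j => if (insub j : option 'I_k) is Some a then v 0 a else 0.
Arguments vec_of {k} v j.

Lemma vec_ofE k (v : 'rV[R]_k) (a : 'I_k) : vec_of v a = v 0 a.
Proof. by rewrite /vec_of valK. Qed.

Lemma pos_def_unit k M : pos_def k M -> Mx k M \in unitmx.
Proof.
move=> HPD; rewrite unitmxE unitfE; apply/negP => /det0P [v vnz vM].
have [j vj] : exists j, v 0 j != 0.
  apply/existsP; apply: contraR vnz => /existsPn H.
  by apply/eqP/rowP => j; rewrite !mxE; apply/eqP; move: (H j); rewrite negbK.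
have : Rlt 0 (sumR k (fun a => sumR k (fun b => Rmult (Rmult (M a b) (vec_of v a)) (vec_of v b)))).
  by apply: HPD; exists j; split; [apply/ltP | rewrite vec_ofE; apply/eqP].
rewrite sumR_big (eq_bigr (fun a : 'I_k => \sum_(b < k) M a b * v 0 a * v 0 b)); last first.
  by move=> a _; rewrite sumR_big; apply: eq_bigr => b _; rewrite !vec_ofE !RmultE.
rewrite exchange_big /= (eq_bigr (fun b : 'I_k => (v *m Mx k M) 0 b * v 0 b)); last first.
  move=> b _; rewrite !mxE mulr_suml; apply: eq_bigr => a _.
  by rewrite mxE [M a b * _]mulrC.
rewrite vM big1 => [|b _]; last by rewrite mxE mul0r.
exact: Rlt_irrefl.
Qed.

Lemma basis_ord k (a c : 'I_k) : basis a c = (1%:M : 'M[R]_k) a c.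
Proof.
rewrite mxE /basis; case: (Nat.eqb_spec a c) => [/val_inj ->| Hne]; first by rewrite eqxx.
by rewrite (introF eqP) // => E; apply: Hne; rewrite E.
Qed.

Lemma ord_of k a : (a < k)%coq_nat -> exists a' : 'I_k, nat_of_ord a' = a.
Proof. by move=> /ltP H; exists (Ordinal H). Qed.

Definition right_inverse (k : nat) (M N : nat -> nat -> R) : Prop :=
  forall a c, (a < k)%coq_nat -> (c < k)%coq_nat ->
    sumR k (fun b => M a b * N b c) = basis a c.

Definition invmx_fun (k : nat) (M : nat -> nat -> R) : nat -> nat -> R := fun a b =>
  match (insub a : option 'I_k), (insub b : option 'I_k) with
  | Some a', Some b' => invmx (Mx k M) a' b' | _, _ => 0 end.

Lemma right_inverse_invmx k M : pos_def k M -> right_inverse k M (invmx_fun k M).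
Proof.
move=> HPD a c Ha Hc.
have [a' <-] := ord_of Ha; have [c' <-] := ord_of Hc.
rewrite sumR_big basis_ord -(mulmxV (pos_def_unit HPD)) mxE.
by apply: eq_bigr => b _; rewrite /invmx_fun !valK !mxE.
Qed.

Lemma mat_inv_right_inverse k M : pos_def k M -> right_inverse k M (mat_inv k M).
Proof.
move=> HPD; apply: (epsilon_spec (inhabits (fun _ _ => R0)) (right_inverse k M)).
by eexists; apply: right_inverse_invmx.
Qed.

Lemma mat_invE k M : pos_def k M -> forall a b : 'I_k, mat_inv k M a b = invmx (Mx k M) a b.
Proof.
move=> HPD; set Nx := \matrix_(a < k, b < k) mat_inv k M a b.
have E : Mx k M *m Nx = 1%:M.
  have HN := mat_inv_right_inverse HPD.
  apply/matrixP => a c; rewrite -basis_ord -HN; try exact/ltP.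
  by rewrite sumR_big mxE; apply: eq_bigr => b _; rewrite !mxE.
have -> : invmx (Mx k M) = Nx by rewrite -[Nx](mulKmx (pos_def_unit HPD)) E mulmx1.
by move=> a b; rewrite mxE.
Qed.

Lemma mat_inv_left_inverse k M : pos_def k M -> forall a c, (a < k)%coq_nat -> (c < k)%coq_nat ->
  sumR k (fun b => mat_inv k M a b * M b c) = basis a c.
Proof.
move=> HPD a c Ha Hc; have [a' <-] := ord_of Ha; have [c' <-] := ord_of Hc.
rewrite sumR_big basis_ord -(mulVmx (pos_def_unit HPD)) mxE.
by apply: eq_bigr => b _; rewrite mat_invE // !mxE.
Qed.

Lemma mat_inv_symmetric k M : pos_def k M -> mx_symmetric k M -> mx_symmetric k (mat_inv k M).
Proof.
move=> HPD Hsym a b Ha Hb; have [a' <-] := ord_of Ha; have [b' <-] := ord_of Hb.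
have HT : (Mx k M)^T = Mx k M.
  by apply/matrixP => i j; rewrite !mxE Hsym //; apply/ltP.
by rewrite !mat_invE // -{1}HT -trmx_inv mxE.
Qed.

Lemma ex_D0_ext f f' : (forall t, f t = f' t) -> ex_D0 f -> ex_D0 f'.
Proof.
by move=> E [l H]; exists l; rewrite (_ : f' = f) //; apply: functional_extensionality => t.
Qed.
Arguments ex_D0_ext {f f'}.

Lemma ex_D0_big (I : Type) (r : seq I) (F : I -> R -> R) (op : R -> R -> R) (x0 : R) :
  (forall f f', ex_D0 f -> ex_D0 f' -> ex_D0 (fun t => op (f t) (f' t))) ->
  (forall i, ex_D0 (F i)) -> ex_D0 (fun t => \big[op/x0]_(i <- r) F i t).
Proof.
move=> Hop H; elim: r => [|i r IH].
  by apply: (ex_D0_ext (f := fun _ => x0)) => [t|]; [rewrite big_nil | exists R0; apply: D0_const].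
by apply: (ex_D0_ext _ (Hop _ _ (H i) IH)) => t; rewrite big_cons.
Qed.

Lemma ex_D0_add f f' : ex_D0 f -> ex_D0 f' -> ex_D0 (fun t => f t + f' t).
Proof. by move=> [a Ha] [b Hb]; eexists; exact: D0_plus Ha Hb. Qed.

Lemma ex_D0_mul f f' : ex_D0 f -> ex_D0 f' -> ex_D0 (fun t => f t * f' t).
Proof. by move=> [a Ha] [b Hb]; eexists; exact: D0_mult Ha Hb. Qed.

(* Leibniz' formula: the determinant is a polynomial in the entries *)
Lemma ex_D0_det k (A : R -> 'M[R]_k) :
  (forall i j, ex_D0 (fun t => A t i j)) -> ex_D0 (fun t => \det (A t)).
Proof.
move=> H; apply: ex_D0_big ex_D0_add _ => s.
apply: ex_D0_mul; first by exists R0; apply: D0_const.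
by apply: ex_D0_big ex_D0_mul _.
Qed.

Lemma ex_D0_adj k (A : R -> 'M[R]_k) :
  (forall i j, ex_D0 (fun t => A t i j)) -> forall i j, ex_D0 (fun t => \adj (A t) i j).
Proof.
move=> H i j; apply: (ex_D0_ext (f := fun t => (-1) ^+ (j + i) * \det (row' j (col' i (A t))))).
  by move=> t; rewrite mxE.
apply: ex_D0_mul; first by exists R0; apply: D0_const.
by apply: ex_D0_det => x y; apply: (ex_D0_ext _ (H (lift j x) (lift i y))) => t; rewrite !mxE.
Qed.

Lemma ex_D0_mat_inv_family k (M : R -> nat -> nat -> R) d : Rlt 0 d ->
  (forall t, Rlt (Rabs t) d -> pos_def k (M t)) ->
  (forall a b, (a < k)%coq_nat -> (b < k)%coq_nat -> ex_D0 (fun t => M t a b)) ->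
  forall a b, (a < k)%coq_nat -> (b < k)%coq_nat -> ex_D0 (fun t => mat_inv k (M t) a b).
Proof.
move=> Hd HPD HM a b Ha Hb; have [a' <-] := ord_of Ha; have [b' <-] := ord_of Hb.
have HMx i j : ex_D0 (fun t => Mx k (M t) i j).
  by apply: (ex_D0_ext _ (HM i j _ _)); [move=> t; rewrite mxE | apply/ltP | apply/ltP].
have [la Hla] := ex_D0_adj _ HMx a' b'; have [ld Hld] := ex_D0_det _ HMx.
have Hnz : \det (Mx k (M R0)) <> 0.
  have H0 : Rlt (Rabs R0) d by rewrite Rabs_R0.
  by move: (pos_def_unit (HPD R0 H0)); rewrite unitmxE unitfE => /eqP.
eexists; apply: (D0_local _ _ _ _ Hd _ (derivable_pt_lim_div _ _ _ _ _ Hla Hld Hnz)).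
move=> t Ht /=; rewrite mat_invE; last exact: HPD.
rewrite /invmx pos_def_unit; last exact: HPD.
by rewrite [RHS]mxE mulrC /Rdiv.
Qed.

End MatrixInverse.

Lemma mat_inv_right k M : pos_def k M -> forall a c, (a < k)%nat -> (c < k)%nat ->
  sumR k (fun b => M a b * mat_inv k M b c) = basis a c.
Proof. exact (@MatrixInverse.mat_inv_right_inverse k M). Qed.

Lemma mat_inv_left k M : pos_def k M -> forall a c, (a < k)%nat -> (c < k)%nat ->
  sumR k (fun b => mat_inv k M a b * M b c) = basis a c.
Proof. exact (@MatrixInverse.mat_inv_left_inverse k M). Qed.

Lemma mat_inv_sym k M : pos_def k M -> mx_symmetric k M -> mx_symmetric k (mat_inv k M).
Proof. exact (@MatrixInverse.mat_inv_symmetric k M). Qed.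

Lemma ex_D0_mat_inv k (M : R -> nat -> nat -> R) d : 0 < d ->
  (forall t, Rabs t < d -> pos_def k (M t)) ->
  (forall a b, (a < k)%nat -> (b < k)%nat -> ex_D0 (fun t => M t a b)) ->
  forall a b, (a < k)%nat -> (b < k)%nat -> ex_D0 (fun t => mat_inv k (M t) a b).
Proof. exact (@MatrixInverse.ex_D0_mat_inv_family k M d). Qed.

(** At [q], the vectors
    [v] with [v^(k+α) = Γ^α_a(q) v^a] form the image of the [m x k] matrix
    [hlift_mx] (the "horizontal lift"); the metric [γ] is the pullback of [g]
    along it, [γ = Lᵀ g L].  This gives its symmetry and positivity. *)

Section Lift.
Variables (m n : nat) (U : vec -> Prop) (g : vec -> nat -> nat -> R)
  (Gam : nat -> nat -> vec -> R).
Hypothesis Hnm : (n <= m)%nat.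
Hypothesis Hg : riemannian m U g.

Local Notation k := (m - n)%nat.

Definition hlift_mx (q : vec) (j c : nat) : R :=
  if Nat.ltb j k then basis j c else Gam (j - k)%nat c q.

Definition hlift (q : vec) (u : nat -> R) (j : nat) : R :=
  sumR k (fun c => hlift_mx q j c * u c).

Lemma sumR_m f : sumR m f = sumR k f + sumR n (fun al => f (k + al)%nat).
Proof. rewrite <- sumR_split. f_equal. lia. Qed.

Lemma hlift_mx_lo q j c : (j < k)%nat -> hlift_mx q j c = basis j c.
Proof. intros H. unfold hlift_mx. destruct (Nat.ltb_spec j k); [reflexivity|lia]. Qed.

Lemma hlift_mx_hi q al c : hlift_mx q (k + al) c = Gam al c q.
Proof.
  unfold hlift_mx. destruct (Nat.ltb_spec (k + al) k); [lia|].
  f_equal. lia.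
Qed.

Lemma hlift_lo q u j : (j < k)%nat -> hlift q u j = u j.
Proof.
  intros Hj. unfold hlift. rewrite <- (sumR_basis k j u Hj).
  apply sumR_ext; intros c Hc. rewrite hlift_mx_lo by exact Hj. reflexivity.
Qed.

Lemma hlift_hi q u al : hlift q u (k + al) = sumR k (fun c => Gam al c q * u c).
Proof. unfold hlift. apply sumR_ext; intros c Hc. rewrite hlift_mx_hi. reflexivity. Qed.

Lemma sumR_hlift_mx q (r : nat -> R) d : (d < k)%nat ->
  sumR m (fun j => r j * hlift_mx q j d) = r d + sumR n (fun al => r (k + al)%nat * Gam al d q).
Proof.
  intros Hd. rewrite sumR_m. f_equal.
  - rewrite <- (sumR_basis k d r Hd). apply sumR_ext; intros j Hj.
    rewrite hlift_mx_lo, basis_sym by exact Hj. ring.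
  - apply sumR_ext; intros al Hal. rewrite hlift_mx_hi. reflexivity.
Qed.

Lemma g_sym q a b : U q -> (a < m)%nat -> (b < m)%nat -> g q a b = g q b a.
Proof. intros. destruct Hg as [_ [Hs _]]. auto. Qed.

Lemma gam_ab_hlift q c d : U q -> (c < k)%nat -> (d < k)%nat ->
  gam_ab m n g Gam q c d
  = sumR m (fun j => sumR m (fun l => g q j l * hlift_mx q j c * hlift_mx q l d)).
Proof.
  intros Hq Hc Hd.
  rewrite (sumR_ext m _ (fun j => sumR m (fun l => g q j l * hlift_mx q l d) * hlift_mx q j c))
    by (intros; sum_ring).
  rewrite sumR_hlift_mx by exact Hc.
  rewrite sumR_hlift_mx by exact Hd.
  rewrite (sumR_ext n (fun al => sumR m (fun l => g q (k + al)%nat l * hlift_mx q l d) * Gam al c q)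
      (fun al => (g q (k + al)%nat d
      + sumR n (fun be => g q (k + al)%nat (k + be)%nat * Gam be d q)) * Gam al c q))
    by (intros; rewrite sumR_hlift_mx by exact Hd; reflexivity).
  unfold gam_ab; cbv zeta. rewrite !Rplus_assoc. do 2 f_equal.
  rewrite <- sumR_add. apply sumR_ext; intros al Hal.
  rewrite (g_sym q d) by (auto; lia). sum_ring.
Qed.

Lemma gam_quad q (u v : nat -> R) : U q ->
  sumR k (fun c => sumR k (fun d => gam_ab m n g Gam q c d * u c * v d))
  = sumR m (fun j => sumR m (fun l => g q j l * hlift q u j * hlift q v l)).
Proof.
  intros Hq. unfold hlift. rewrite <- sumR_pullback. apply sumR_ext; intros c Hc.
  apply sumR_ext; intros d Hd. rewrite gam_ab_hlift by assumption. reflexivity.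
Qed.

Lemma gam_pos_def q : U q -> pos_def k (gam_ab m n g Gam q).
Proof.
  intros Hq v [a [Ha Hva]]. rewrite gam_quad by exact Hq.
  destruct Hg as [_ [_ Hpd]]. apply Hpd; [exact Hq|].
  exists a; split; [lia|]. rewrite hlift_lo by exact Ha. exact Hva.
Qed.

Lemma gam_sym q : U q -> mx_symmetric k (gam_ab m n g Gam q).
Proof.
  intros Hq c d Hc Hd. rewrite !gam_ab_hlift by assumption.
  rewrite sumR_swap. apply sumR_ext; intros j Hj. apply sumR_ext; intros l Hl.
  rewrite (g_sym q l j) by (auto; lia). ring.
Qed.

End Lift.

Section Main.
Variables (m n : nat) (U : vec -> Prop) (g : vec -> nat -> nat -> R)
  (V : vec -> R) (Gam : nat -> nat -> vec -> R) (h : R).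
Hypothesis Hnm : (n <= m)%nat.
Hypothesis HU : is_open m U.
Hypothesis Hg : riemannian m U g.
Hypothesis HV : smooth_on m U V.
Hypothesis HGam : forall al a, (al < n)%nat -> (a < m - n)%nat ->
  smooth_on m U (Gam al a) /\ dep_first m (Gam al a).
Hypothesis Hh : 0 < h.

Local Notation k := (m - n)%nat.
Local Notation L := (hlift_mx m n Gam).
Local Notation gam q := (gam_ab m n g Gam q).

Section Point.
Variables q0 q1 p1 : vec.
Hypothesis HU0 : U q0.

Definition Dl (j : nat) : R := q1 j - q0 j.
Definition N : nat -> nat -> R := mat_inv k (gam q0).
Definition P (a : nat) : R := Pa m n Gam q0 p1 a.
(* the velocity [γ^{-1} P] in the free directions *)
Definition y (a : nat) : R := sumR k (fun b => N a b * P b).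
Definition Z (al : nat) : R := sumR m (fun j => g q0 (k + al)%nat j * Dl j).

Definition dG (i j l : nat) : R := partial (fun q => g q j l) q0 i.
Definition dGam (i al a : nat) : R := partial (Gam al a) q0 i.
Definition dgam (i c d : nat) : R := partial (fun q => gam q c d) q0 i.
Definition dN (i a b : nat) : R := partial (fun q => mat_inv k (gam q) a b) q0 i.
Definition dL (i j c : nat) : R := if Nat.ltb j k then 0 else dGam i (j - k)%nat c.
Definition W (i al : nat) : R := sumR k (fun a => dGam i al a * Dl a).
Definition dP (i a : nat) : R := sumR n (fun al => p1 (k + al)%nat * dGam i al a).

Definition constrained : Prop :=
  forall al, (al < n)%nat -> Dl (k + al)%nat = sumR k (fun a => Gam al a q0 * Dl a).

Lemma constrained_iff :
  (forall al, (al < n)%nat -> phid m n Gam al q0 q1 = 0) <-> constrained.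
Proof. unfold constrained, phid, Dl. split; intros H al Hal; specialize (H al Hal); lra. Qed.

Lemma D0_g i a b : (i < m)%nat -> (a < m)%nat -> (b < m)%nat ->
  D0 (fun t => g (line q0 i t) a b) (dG i a b).
Proof.
  intros Hi Ha Hb. destruct Hg as [Hsm _]. destruct (Hsm a b Ha Hb) as [Hs _].
  exact (smooth_D0 m U (fun q => g q a b) q0 i HU Hs HU0 Hi).
Qed.

Lemma D0_Gam i al a : (i < m)%nat -> (al < n)%nat -> (a < k)%nat ->
  D0 (fun t => Gam al a (line q0 i t)) (dGam i al a).
Proof.
  intros Hi Hal Ha. destruct (HGam al a Hal Ha) as [Hs _].
  exact (smooth_D0 m U (Gam al a) q0 i HU Hs HU0 Hi).
Qed.

Lemma D0_V i : (i < m)%nat -> D0 (fun t => V (line q0 i t)) (partial V q0 i).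
Proof. intros Hi. exact (smooth_D0 m U V q0 i HU HV HU0 Hi). Qed.

#[local] Hint Extern 1 (D0 (fun t => g (line _ _ t) _ _) _) => (apply D0_g; lia) : d0.
#[local] Hint Extern 1 (D0 (fun t => Gam _ _ (line _ _ t)) _) => (apply D0_Gam; lia) : d0.
#[local] Hint Extern 1 (D0 (fun t => V (line _ _ t)) _) => (apply D0_V; lia) : d0.

Lemma D0_L i j c : (i < m)%nat -> (j < m)%nat -> (c < k)%nat ->
  D0 (fun t => L (line q0 i t) j c) (dL i j c).
Proof.
  intros Hi Hj Hc. unfold hlift_mx, dL. destruct (Nat.ltb_spec j k).
  - apply D0_const.
  - apply D0_Gam; lia.
Qed.

Lemma D0_gam i c d : (i < m)%nat -> (c < k)%nat -> (d < k)%nat ->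
  D0 (fun t => gam (line q0 i t) c d) (dgam i c d).
Proof.
  intros Hi Hc Hd.
  assert (Hex : ex_D0 (fun t => gam (line q0 i t) c d)).
  { eexists. unfold gam_ab; cbv zeta. d0_tree. }
  destruct Hex as [l Hl]. unfold dgam. rewrite (partial_eq _ _ _ _ Hl). exact Hl.
Qed.

#[local] Hint Extern 1 (D0 (fun t => gam_ab _ _ _ _ (line _ _ t) _ _) _) =>
  (apply D0_gam; lia) : d0.
#[local] Hint Extern 1 (D0 (fun t => hlift_mx _ _ _ (line _ _ t) _ _) _) =>
  (apply D0_L; lia) : d0.

Lemma D0_N i a b : (i < m)%nat -> (a < k)%nat -> (b < k)%nat ->
  D0 (fun t => mat_inv k (gam (line q0 i t)) a b) (dN i a b).
Proof.
  intros Hi Ha Hb. destruct (open_line m U q0 i HU HU0) as [d [Hd Hl]].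
  destruct (ex_D0_mat_inv k (fun t => gam (line q0 i t)) d Hd
              (fun t Ht => gam_pos_def m n U g Gam Hnm Hg _ (Hl t Ht))
              (fun a' b' Ha' Hb' => ex_intro _ _ (D0_gam i a' b' Hi Ha' Hb')) a b Ha Hb)
    as [l HN].
  unfold dN. rewrite (partial_eq _ _ _ _ HN). exact HN.
Qed.

#[local] Hint Extern 1 (D0 (fun t => mat_inv _ (gam_ab _ _ _ _ (line _ _ t)) _ _) _) =>
  (apply D0_N; lia) : d0.

Lemma dgam_hlift i c d : (i < m)%nat -> (c < k)%nat -> (d < k)%nat ->
  dgam i c d = sumR m (fun j => sumR m (fun l => dG i j l * L q0 j c * L q0 l d))
    + sumR m (fun j => sumR m (fun l => g q0 j l * dL i j c * L q0 l d))
    + sumR m (fun j => sumR m (fun l => g q0 j l * L q0 j c * dL i l d)).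
Proof.
  intros Hi Hc Hd. destruct (open_line m U q0 i HU HU0) as [r [Hr Hl]].
  apply (D0_unique (fun t => gam (line q0 i t) c d)); [apply D0_gam; assumption|].
  apply (D0_local (fun t => sumR m (fun j => sumR m (fun l =>
           g (line q0 i t) j l * L (line q0 i t) j c * L (line q0 i t) l d))) _ _ r Hr).
  { intros t Ht. symmetry. apply (gam_ab_hlift m n U g Gam Hnm Hg); auto. }
  d0_calc. rewrite <- !sumR2_add.
  apply sumR_ext; intros j Hj. apply sumR_ext; intros l Hl'. ring.
Qed.

Lemma hlift_constrained j : constrained -> (j < m)%nat ->
  sumR k (fun c => L q0 j c * Dl c) = Dl j.
Proof.
  intros Hc Hj. fold (hlift m n Gam q0 Dl j). destruct (Nat.ltb_spec j k).
  - apply hlift_lo; assumption.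
  - replace j with (k + (j - k))%nat by lia. rewrite hlift_hi, Hc by lia. reflexivity.
Qed.

Lemma sumR_dL i (r : nat -> R) :
  sumR m (fun j => r j * sumR k (fun c => dL i j c * Dl c))
  = sumR n (fun al => r (k + al)%nat * W i al).
Proof.
  rewrite (sumR_m m n Hnm). rewrite sumR_eq0, Rplus_0_l.
  - apply sumR_ext; intros al Hal. unfold dL, W. destruct (Nat.ltb_spec (k + al) k); [lia|].
    replace (k + al - k)%nat with al by lia. reflexivity.
  - intros j Hj. unfold dL. destruct (Nat.ltb_spec j k); [|lia].
    rewrite sumR_eq0; [ring|]. intros; ring.
Qed.

Lemma dgam_quad i : constrained -> (i < m)%nat ->
  sumR k (fun c => sumR k (fun d => dgam i c d * Dl c * Dl d))
  = sumR m (fun j => sumR m (fun l => dG i j l * Dl j * Dl l))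
    + 2 * sumR n (fun al => Z al * W i al).
Proof.
  intros Hc Hi.
  transitivity
    (sumR k (fun c => sumR k (fun d =>
       sumR m (fun j => sumR m (fun l => dG i j l * L q0 j c * L q0 l d)) * Dl c * Dl d))
   + sumR k (fun c => sumR k (fun d =>
       sumR m (fun j => sumR m (fun l => g q0 j l * dL i j c * L q0 l d)) * Dl c * Dl d))
   + sumR k (fun c => sumR k (fun d =>
       sumR m (fun j => sumR m (fun l => g q0 j l * L q0 j c * dL i l d)) * Dl c * Dl d))).
  { rewrite <- !sumR2_add. apply sumR_ext; intros c Hc'. apply sumR_ext; intros d Hd.
    rewrite dgam_hlift by assumption. ring. }
  rewrite !sumR_pullback.
  assert (HL : forall j, (j < m)%nat -> sumR k (fun c => L q0 j c * Dl c) = Dl j)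
    by (intros; apply hlift_constrained; assumption).
  rewrite (sumR_ext m _ (fun j => sumR m (fun l => dG i j l * Dl j * Dl l)))
    by (intros j Hj; apply sumR_ext; intros l Hl; rewrite !HL by assumption; reflexivity).
  rewrite Rplus_assoc. f_equal.
  assert (E2 : sumR m (fun j => sumR m (fun l => g q0 j l * sumR k (fun c => dL i j c * Dl c)
                 * sumR k (fun d => L q0 l d * Dl d))) = sumR n (fun al => Z al * W i al)).
  { unfold Z. rewrite <- (sumR_dL i (fun j => sumR m (fun l => g q0 j l * Dl l))).
    apply sumR_ext; intros j Hj. rewrite sumR_mul_r.
    apply sumR_ext; intros l Hl. rewrite HL by assumption. ring. }
  assert (E3 : sumR m (fun j => sumR m (fun l => g q0 j l * sumR k (fun c => L q0 j c * Dl c)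
                 * sumR k (fun d => dL i l d * Dl d))) = sumR n (fun al => Z al * W i al)).
  { unfold Z. rewrite sumR_swap, <- (sumR_dL i (fun l => sumR m (fun j => g q0 l j * Dl j))).
    apply sumR_ext; intros l Hl. rewrite sumR_mul_r.
    apply sumR_ext; intros j Hj. rewrite HL, (g_sym m U g Hg q0 l j) by assumption. ring. }
  rewrite E2, E3. ring.
Qed.

Lemma N_sym : mx_symmetric k N.
Proof.
  apply mat_inv_sym; [apply (gam_pos_def m n U g Gam Hnm Hg) | apply (gam_sym m n U g Gam Hnm Hg)];
    exact HU0.
Qed.

Lemma P_gam_y a : (a < k)%nat -> P a = sumR k (fun c => gam q0 c a * y c).
Proof.
  intros Ha. unfold y.
  transitivity (sumR k (fun b => sumR k (fun c => gam q0 a c * N c b) * P b)).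
  - rewrite <- (sumR_basis k a P Ha). apply sumR_ext; intros b Hb. unfold N.
    rewrite mat_inv_right by (auto; apply (gam_pos_def m n U g Gam Hnm Hg); exact HU0).
    reflexivity.
  - transitivity (sumR k (fun b => sumR k (fun c => gam q0 a c * N c b * P b))); [sum_ring|].
    rewrite sumR_swap. apply sumR_ext; intros c Hc.
    rewrite (gam_sym m n U g Gam Hnm Hg q0 HU0 a c) by assumption. sum_ring.
Qed.

(* derivative of [γ N = 1] *)
Lemma dN_right i a c : (i < m)%nat -> (a < k)%nat -> (c < k)%nat ->
  sumR k (fun b => dgam i a b * N b c + gam q0 a b * dN i b c) = 0.
Proof.
  intros Hi Ha Hc. destruct (open_line m U q0 i HU HU0) as [r [Hr Hl]].
  apply (D0_unique (fun t => sumR k (fun b => gam (line q0 i t) a b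
                                     * mat_inv k (gam (line q0 i t)) b c))).
  - d0_calc. reflexivity.
  - apply (D0_local (fun _ => basis a c) _ _ r Hr); [|apply D0_const].
    intros t Ht. symmetry. apply mat_inv_right; [|assumption..].
    apply (gam_pos_def m n U g Gam Hnm Hg). exact (Hl t Ht).
Qed.

Lemma dN_quad i : (i < m)%nat ->
  sumR k (fun a => sumR k (fun b => dN i a b * P a * P b))
  = - sumR k (fun c => sumR k (fun d => dgam i c d * y c * y d)).
Proof.
  intros Hi.
  transitivity (sumR k (fun b => P b * sumR k (fun c => y c *
                  sumR k (fun a => gam q0 c a * dN i a b)))).
  { rewrite sumR_swap. apply sumR_ext; intros b Hb.
    rewrite (sumR_ext k (fun a => dN i a b * P a * P b)
               (fun a => sumR k (fun c => dN i a b * gam q0 c a * y c * P b)))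
      by (intros a Ha; rewrite P_gam_y by assumption; sum_ring).
    rewrite sumR_swap. sum_ring. }
  transitivity (- sumR k (fun b => P b * sumR k (fun c => y c *
                  sumR k (fun a => dgam i c a * N a b)))).
  { rewrite <- sumR_opp. apply sumR_ext; intros b Hb. rewrite Ropp_mult_distr_r.
    f_equal. rewrite <- sumR_opp. apply sumR_ext; intros c Hc.
    assert (E := dN_right i c b Hi Hc Hb). rewrite sumR_add in E.
    replace (sumR k (fun a => gam q0 c a * dN i a b))
      with (- sumR k (fun a => dgam i c a * N a b)) by lra. ring. }
  f_equal.
  transitivity (sumR k (fun b => sumR k (fun c => sumR k (fun a =>
                  dgam i c a * y c * (N a b * P b))))); [sum_ring|].
  rewrite sumR_swap. apply sumR_ext; intros c Hc. rewrite sumR_swap.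
  apply sumR_ext; intros a Ha. change (y a) with (sumR k (fun b => N a b * P b)).
  rewrite sumR_mul_l. apply sumR_ext; intros; ring.
Qed.

Lemma D0_P i a : (i < m)%nat -> (a < k)%nat ->
  D0 (fun t => Pa m n Gam (line q0 i t) p1 a) (dP i a).
Proof.
  intros Hi Ha. unfold Pa. d0_calc. apply sumR_ext; intros; ring.
Qed.

#[local] Hint Extern 1 (D0 (fun t => Pa _ _ _ (line _ _ t) _ _) _) => (apply D0_P; lia) : d0.

Lemma dH_q i : (i < m)%nat ->
  partial (fun q => Ham m n g V Gam q p1) q0 i
  = - / 2 * sumR k (fun c => sumR k (fun d => dgam i c d * y c * y d))
    + sumR k (fun a => dP i a * y a) + partial V q0 i.
Proof.
  intros Hi. apply partial_eq. unfold Ham; cbv zeta. d0_calc.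
  change (mat_inv k (gam q0)) with N. change (Pa m n Gam q0 p1) with P.
  assert (E : sumR k (fun a => sumR k (fun b =>
                (dN i a b * P a + N a b * dP i a) * P b + N a b * P a * dP i b))
              = sumR k (fun a => sumR k (fun b => dN i a b * P a * P b))
                + 2 * sumR k (fun a => dP i a * y a)).
  { rewrite (sumR_ext k _ (fun a => sumR k (fun b => dN i a b * P a * P b)
        + sumR k (fun b => N a b * dP i a * P b + N a b * P a * dP i b)))
      by (intros a Ha; rewrite <- sumR_add; apply sumR_ext; intros; ring).
    rewrite sumR_add, (sumR_sym_polar k N P (dP i) N_sym). reflexivity. }
  rewrite E. pose proof (dN_quad i Hi). lra.
Qed.

Definition dPp (i a : nat) : R := basis i a + sumR n (fun al => basis i (k + al)%nat * Gam al a q0).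

Lemma D0_P_momentum i a :
  D0 (fun t => Pa m n Gam q0 (line p1 i t) a) (dPp i a).
Proof. unfold Pa, dPp. d0_calc. f_equal. apply sumR_ext; intros; ring. Qed.

#[local] Hint Extern 1 (D0 (fun t => Pa _ _ _ _ (line _ _ t) _) _) => apply D0_P_momentum : d0.

Lemma dH_p i : partial (fun p => Ham m n g V Gam q0 p) p1 i = sumR k (fun a => dPp i a * y a).
Proof.
  apply partial_eq. unfold Ham; cbv zeta. d0_calc.
  change (mat_inv k (gam q0)) with N. change (Pa m n Gam q0 p1) with P.
  rewrite (sumR_ext k _ (fun a => sumR k (fun b => N a b * dPp i a * P b + N a b * P a * dPp i b)))
    by (intros; apply sumR_ext; intros; ring).
  rewrite (sumR_sym_polar k N P (dPp i) N_sym). unfold y. field.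
Qed.

Lemma dH_p_free a : (a < k)%nat -> partial (fun p => Ham m n g V Gam q0 p) p1 a = y a.
Proof.
  intros Ha. rewrite dH_p. rewrite <- (sumR_basis k a y Ha). apply sumR_ext; intros b Hb.
  unfold dPp. rewrite sumR_eq0; [ring|]. intros al Hal. rewrite basis_neq by lia. ring.
Qed.

Lemma dH_p_constrained be : (be < n)%nat ->
  partial (fun p => Ham m n g V Gam q0 p) p1 (k + be)%nat = sumR k (fun a => Gam be a q0 * y a).
Proof.
  intros Hbe. rewrite dH_p. apply sumR_ext; intros a Ha. unfold dPp.
  rewrite basis_neq by lia. rewrite (sumR_ext n _ (fun al => basis be al * Gam al a q0))
    by (intros; rewrite basis_shift; reflexivity).
  rewrite sumR_basis by assumption. ring.
Qed.

Lemma g_polar i : (i < m)%nat ->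
  sumR m (fun j => sumR m (fun l => g q0 j l * basis i j * Dl l + g q0 j l * Dl j * basis i l))
  = 2 * sumR m (fun j => g q0 i j * Dl j).
Proof.
  intros Hi. rewrite sumR_sym_polar by (intros a b Ha Hb; apply (g_sym m U g Hg); assumption).
  f_equal. apply sumR_basis; assumption.
Qed.

Lemma dL_q1 i : (i < m)%nat ->
  partial (fun x => LLd m g V h q0 x) q1 i = / h * sumR m (fun j => g q0 i j * Dl j).
Proof.
  intros Hi. apply partial_eq. unfold LLd. d0_calc.
  rewrite (sumR_ext m _ (fun j => sumR m (fun l =>
             g q0 j l * basis i j * Dl l + g q0 j l * Dl j * basis i l)))
    by (intros; apply sumR_ext; intros; unfold Dl; ring).
  rewrite g_polar by assumption. field. lra.
Qed.

Lemma dL_q0 i : (i < m)%nat ->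
  partial (fun x => LLd m g V h x q1) q0 i
  = / (2 * h) * sumR m (fun j => sumR m (fun l => dG i j l * Dl j * Dl l))
    - / h * sumR m (fun j => g q0 i j * Dl j) - h * partial V q0 i.
Proof.
  intros Hi. apply partial_eq. unfold LLd. d0_calc.
  rewrite (sumR_ext m _ (fun j => sumR m (fun l => dG i j l * Dl j * Dl l
             - (g q0 j l * basis i j * Dl l + g q0 j l * Dl j * basis i l))))
    by (intros; apply sumR_ext; intros; unfold Dl; ring).
  rewrite sumR2_sub, g_polar by assumption. field. lra.
Qed.

Lemma dphi_q1 al i : (al < n)%nat ->
  partial (fun x => phid m n Gam al q0 x) q1 i
  = basis i (k + al)%nat - sumR k (fun a => Gam al a q0 * basis i a).
Proof.
  intros Hal. apply partial_eq. unfold phid. d0_calc.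
  unfold Rminus. do 2 f_equal. apply sumR_ext; intros; ring.
Qed.

Lemma dphi_q0 al i : (i < m)%nat -> (al < n)%nat ->
  partial (fun x => phid m n Gam al x q1) q0 i
  = - basis i (k + al)%nat - sumR k (fun a => dGam i al a * Dl a - Gam al a q0 * basis i a).
Proof.
  intros Hi Hal. apply partial_eq. unfold phid. d0_calc.
  unfold Rminus. do 2 f_equal. apply sumR_ext; intros; unfold Dl; ring.
Qed.

(** The discrete Legendre transforms of the constrained Lagrangian with
    multipliers [lam]: [Σ_{L_d}] asks [-p0 = D1_Ld lam] and [p1 = D2_Ld lam]. *)
Definition D1_Ld (i : nat) (lam : nat -> R) : R :=
  partial (fun x => LLd m g V h x q1) q0 i
  + sumR n (fun al => lam al * partial (fun x => phid m n Gam al x q1) q0 i).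
Definition D2_Ld (i : nat) (lam : nat -> R) : R :=
  partial (fun x => LLd m g V h q0 x) q1 i
  + sumR n (fun al => lam al * partial (fun x => phid m n Gam al q0 x) q1 i).

(* the multipliers forced by the constrained components of [p1] *)
Definition lam_star (al : nat) : R := p1 (k + al)%nat - / h * Z al.

Lemma D2_Ld_constrained lam be : (be < n)%nat -> D2_Ld (k + be)%nat lam = / h * Z be + lam be.
Proof.
  intros Hbe. unfold D2_Ld. rewrite dL_q1 by lia.
  rewrite (sumR_ext n _ (fun al => basis be al * lam al)).
  - rewrite sumR_basis by assumption. reflexivity.
  - intros al Hal. rewrite dphi_q1, basis_shift by assumption.
    rewrite sumR_eq0 by (intros a Ha; rewrite basis_neq by lia; ring). ring.
Qed.

Lemma D2_Ld_free lam a : (a < k)%nat ->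
  D2_Ld a lam = / h * sumR m (fun j => g q0 a j * Dl j) - sumR n (fun al => lam al * Gam al a q0).
Proof.
  intros Ha. unfold D2_Ld. rewrite dL_q1 by lia. unfold Rminus. f_equal.
  rewrite <- sumR_opp. apply sumR_ext; intros al Hal. rewrite dphi_q1, basis_neq by lia.
  rewrite (sumR_ext k _ (fun c => basis a c * Gam al c q0)) by (intros; ring).
  rewrite sumR_basis by assumption. ring.
Qed.

Lemma D1_plus_D2 lam i : (i < m)%nat ->
  D1_Ld i lam + D2_Ld i lam
  = / (2 * h) * sumR m (fun j => sumR m (fun l => dG i j l * Dl j * Dl l))
    - h * partial V q0 i - sumR n (fun al => lam al * W i al).
Proof.
  intros Hi.
  assert (E : sumR n (fun al => lam al * partial (fun x => phid m n Gam al x q1) q0 i)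
              = - sumR n (fun al => lam al * W i al)
                - sumR n (fun al => lam al * partial (fun x => phid m n Gam al q0 x) q1 i)).
  { rewrite <- sumR_opp, <- sumR_sub. apply sumR_ext; intros al Hal.
    rewrite dphi_q0, dphi_q1 by assumption. unfold W. rewrite sumR_sub. ring. }
  unfold D1_Ld, D2_Ld. rewrite E, dL_q0, dL_q1 by assumption. field. lra.
Qed.

Lemma gam_row_constrained a : constrained -> (a < k)%nat ->
  sumR k (fun b => gam q0 a b * Dl b)
  = sumR m (fun j => g q0 a j * Dl j) + sumR n (fun al => Gam al a q0 * Z al).
Proof.
  intros Hc Ha.
  transitivity (sumR m (fun j => sumR m (fun l => g q0 j l * Dl l) * L q0 j a)).
  - rewrite (sumR_ext k _ (fun b => sumR m (fun j => sumR m (fun l =>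
               g q0 j l * L q0 j a * L q0 l b * Dl b))))
      by (intros; rewrite (gam_ab_hlift m n U g Gam Hnm Hg) by assumption; sum_ring).
    rewrite sumR_swap. apply sumR_ext; intros j Hj. rewrite sumR_swap, sumR_mul_r.
    apply sumR_ext; intros l Hl. rewrite <- (hlift_constrained l Hc Hl). sum_ring.
  - rewrite (sumR_hlift_mx m n Gam) by assumption. unfold Z. f_equal.
    apply sumR_ext; intros; ring.
Qed.

Lemma D2_Ld_free_star lam a : constrained ->
  (forall al, (al < n)%nat -> lam al = lam_star al) -> (a < k)%nat ->
  D2_Ld a lam - p1 a = / h * sumR k (fun b => gam q0 a b * Dl b) - P a.
Proof.
  intros Hc Hlam Ha. rewrite D2_Ld_free, gam_row_constrained by assumption.
  rewrite (sumR_ext n (fun al => lam al * Gam al a q0)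
             (fun al => p1 (k + al)%nat * Gam al a q0 - / h * (Gam al a q0 * Z al)))
    by (intros; rewrite Hlam by assumption; unfold lam_star; ring).
  rewrite sumR_sub, <- sumR_mul_l. unfold P, Pa. ring.
Qed.

Lemma velocity_iff :
  (forall a, (a < k)%nat -> P a = / h * sumR k (fun b => gam q0 a b * Dl b))
  <-> (forall a, (a < k)%nat -> Dl a = h * y a).
Proof.
  assert (Hpd := gam_pos_def m n U g Gam Hnm Hg q0 HU0).
  split; intros H a Ha.
  - unfold y. rewrite (sumR_ext k _ (fun b => / h * sumR k (fun c => N a b * gam q0 b c * Dl c)))
      by (intros b Hb; rewrite H by assumption; sum_ring).
    rewrite <- sumR_mul_l, sumR_swap.
    rewrite (sumR_ext k _ (fun c => basis a c * Dl c)).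
    + rewrite sumR_basis by assumption. field. lra.
    + intros c Hc. rewrite <- (mat_inv_left k (gam q0) Hpd a c Ha Hc), sumR_mul_r. reflexivity.
  - rewrite P_gam_y by assumption.
    rewrite (sumR_ext k (fun b => gam q0 a b * Dl b) (fun b => h * (gam q0 b a * y b)))
      by (intros b Hb; rewrite H, (gam_sym m n U g Gam Hnm Hg q0 HU0 a b) by assumption; ring).
    rewrite <- sumR_mul_l. field. lra.
Qed.

Lemma index_split i : (i < m)%nat -> (i < k)%nat \/ exists be, (be < n)%nat /\ i = (k + be)%nat.
Proof.
  intros Hi. destruct (Nat.ltb_spec i k); [left; assumption | right; exists (i - k)%nat; split; lia].
Qed.

Lemma position_step_iff :
  (forall i, (i < m)%nat -> q1 i = q0 i + h * partial (fun p => Ham m n g V Gam q0 p) p1 i)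
  <-> (forall a, (a < k)%nat -> Dl a = h * y a) /\ constrained.
Proof.
  assert (Hhy : (forall a, (a < k)%nat -> Dl a = h * y a) -> forall be,
            h * sumR k (fun a => Gam be a q0 * y a) = sumR k (fun a => Gam be a q0 * Dl a)).
  { intros Hy be. rewrite sumR_mul_l. apply sumR_ext; intros a Ha. rewrite Hy by assumption. ring. }
  split.
  - intros H.
    assert (Hy : forall a, (a < k)%nat -> Dl a = h * y a).
    { intros a Ha. specialize (H a ltac:(lia)). rewrite dH_p_free in H by assumption.
      unfold Dl. lra. }
    split; [exact Hy|]. intros be Hbe. specialize (H (k + be)%nat ltac:(lia)).
    rewrite dH_p_constrained in H by assumption. rewrite <- Hhy by exact Hy. unfold Dl. lra.
  - intros [Hy Hc] i Hi. destruct (index_split i Hi) as [Hik | [be [Hbe ->]]].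
    + rewrite dH_p_free, <- Hy by assumption. unfold Dl. ring.
    + rewrite dH_p_constrained, Hhy, <- Hc by assumption. unfold Dl. ring.
Qed.

Lemma D1_plus_D2_hamiltonian lam i : constrained ->
  (forall a, (a < k)%nat -> Dl a = h * y a) ->
  (forall al, (al < n)%nat -> lam al = lam_star al) -> (i < m)%nat ->
  D1_Ld i lam + D2_Ld i lam = - h * partial (fun q => Ham m n g V Gam q p1) q0 i.
Proof.
  intros Hc Hy Hlam Hi. rewrite D1_plus_D2, dH_q by assumption.
  assert (EW : sumR n (fun al => lam al * W i al)
               = sumR n (fun al => p1 (k + al)%nat * W i al) - / h * sumR n (fun al => Z al * W i al)).
  { rewrite sumR_mul_l, <- sumR_sub. apply sumR_ext; intros al Hal.
    rewrite Hlam by assumption. unfold lam_star. ring. }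
  assert (EY : sumR k (fun c => sumR k (fun d => dgam i c d * Dl c * Dl d))
               = h * h * sumR k (fun c => sumR k (fun d => dgam i c d * y c * y d))).
  { sum_in. apply sumR_ext; intros c Hc'. sum_in. apply sumR_ext; intros d Hd.
    rewrite !Hy by assumption. ring. }
  assert (EP : h * sumR k (fun a => dP i a * y a) = sumR n (fun al => p1 (k + al)%nat * W i al)).
  { rewrite sumR_mul_l.
    rewrite (sumR_ext k _ (fun a => sumR n (fun al => p1 (k + al)%nat * dGam i al a * Dl a)))
      by (intros a Ha; rewrite (Hy a Ha); unfold dP; sum_ring).
    rewrite sumR_swap. apply sumR_ext; intros al Hal. unfold W. sum_ring. }
  rewrite EW, <- EP.
  replace (sumR m (fun j => sumR m (fun l => dG i j l * Dl j * Dl l)))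
    with (h * h * sumR k (fun c => sumR k (fun d => dgam i c d * y c * y d))
          - 2 * sumR n (fun al => Z al * W i al))
    by (rewrite <- EY, dgam_quad by assumption; ring).
  field. lra.
Qed.

Lemma euler_of_sigma p0 : Upsilon_Sigma_Ld m n U g V Gam h q0 p0 q1 p1 ->
  symplectic_euler m n U g V Gam h q0 p0 q1 p1.
Proof.
  intros [[_ [HU1 Hphi]] [lam Hl]].
  assert (Hc : constrained) by (apply constrained_iff; exact Hphi).
  assert (Hlam : forall al, (al < n)%nat -> lam al = lam_star al).
  { intros al Hal. destruct (Hl (k + al)%nat ltac:(lia)) as [_ E].
    change (p1 (k + al)%nat = D2_Ld (k + al)%nat lam) in E.
    rewrite D2_Ld_constrained in E by assumption. unfold lam_star. lra. }
  assert (Hy : forall a, (a < k)%nat -> Dl a = h * y a).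
  { apply velocity_iff. intros a Ha. destruct (Hl a ltac:(lia)) as [_ E].
    change (p1 a = D2_Ld a lam) in E.
    pose proof (D2_Ld_free_star lam a Hc Hlam Ha) as Hfree. lra. }
  split; [exact HU0 | split; [exact HU1 |]]. intros i Hi. split.
  - destruct (Hl i Hi) as [E1 E2].
    pose proof (D1_plus_D2_hamiltonian lam i Hc Hy Hlam Hi) as Hbal.
    unfold D1_Ld, D2_Ld in *. lra.
  - apply position_step_iff; [split|]; assumption.
Qed.

Lemma sigma_of_euler p0 : symplectic_euler m n U g V Gam h q0 p0 q1 p1 ->
  Upsilon_Sigma_Ld m n U g V Gam h q0 p0 q1 p1.
Proof.
  intros [_ [HU1 H]].
  destruct (proj1 position_step_iff (fun i Hi => proj2 (H i Hi))) as [Hy Hc].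
  split; [split; [exact HU0 | split; [exact HU1 | apply constrained_iff; exact Hc]]|].
  exists lam_star.
  assert (Hp1 : forall i, (i < m)%nat -> p1 i = D2_Ld i lam_star).
  { intros i Hi. destruct (index_split i Hi) as [Hik | [be [Hbe ->]]].
    - pose proof (D2_Ld_free_star lam_star i Hc (fun _ _ => eq_refl) Hik) as E.
      rewrite <- (proj2 velocity_iff Hy i Hik) in E. lra.
    - rewrite D2_Ld_constrained by assumption. unfold lam_star. field. lra. }
  intros i Hi. split; [|exact (Hp1 i Hi)].
  pose proof (D1_plus_D2_hamiltonian lam_star i Hc Hy (fun _ _ => eq_refl) Hi) as E.
  rewrite <- Hp1 in E by exact Hi. destruct (H i Hi) as [Hp _].
  unfold D1_Ld in E. lra.
Qed.

End Point.

Lemma sigma_iff_euler q0 p0 q1 p1 :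
  Upsilon_Sigma_Ld m n U g V Gam h q0 p0 q1 p1 <-> symplectic_euler m n U g V Gam h q0 p0 q1 p1.
Proof.
  split.
  - intros HS. apply euler_of_sigma; [|exact HS]. destruct HS as [[HU0 _] _]. exact HU0.
  - intros HE. apply sigma_of_euler; [|exact HE]. destruct HE as [HU0 _]. exact HU0.
Qed.

End Main.

Theorem mainTheorem4 (m n : nat) (U : vec -> Prop) (g : vec -> nat -> nat -> R)
  (V : vec -> R) (Gam : nat -> nat -> vec -> R) (h : R) :
  (n <= m)%nat ->
  is_open m U ->
  riemannian m U g ->
  smooth_on m U V -> dep_first m V ->
  (forall al a, (al < n)%nat -> (a < m - n)%nat ->
     smooth_on m U (Gam al a) /\ dep_first m (Gam al a)) ->
  0 < h ->
  forall q0 p0 q1 p1 : vec,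
    Upsilon_Sigma_Ld m n U g V Gam h q0 p0 q1 p1 <->
    symplectic_euler m n U g V Gam h q0 p0 q1 p1.
Proof.
  intros Hnm HU Hg HV _ HGam Hh q0 p0 q1 p1.
  exact (sigma_iff_euler m n U g V Gam h Hnm HU Hg HV HGam Hh q0 p0 q1 p1).
Qed.
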